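(* Let $K$ be a field, $S=K[X_1,\ldots,X_n]$, $I\subset S$ a monomial ideal, $R=S/I$, and let $x_i$ denote the image of $X_i$ in $R$. Let $x=x_{i_1}\cdots x_{i_r}$ with $1\le i_1<\cdots<i_r\le n$, and set $F=\{i_1,\ldots,i_r\}$. Then for every $a\in\mathbb{Z}^n$ we have $\dim_K (R_x)_a\le 1$, and the following are equivalent: (i) $(R_x)_a\cong K$; (ii) $F\supset G_a$, and for every $u\in G(I)$ there exists $j\notin F$ such that $\nu_j(u)>a_j\ge 0$.
   Context: $S$ and $R$ carry the $\mathbb{Z}^n$-grading with $\deg X_i=e_i$ (the $i$-th unit vector); $R_x$ denotes the localization of $R$ at the element $x$ (equivalently at $x_{i_1},\ldots,x_{i_r}$), with the induced $\mathbb{Z}^n$-grading, and $(R_x)_a$ is its component of degree $a$. $G(I)$ is the minimal set of monomial generators of $I$. For a monomial $u=X_1^{c_1}\cdots X_n^{c_n}$, $\nu_j(u)=c_j$. For $a=(a_1,\ldots,a_n)\in\mathbb{Z}^n$, $G_a=\{i\mid a_i<0\}$. *)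

From mathcomp Require Import all_boot all_algebra.
From mathcomp Require Export mpoly.
Set Implicit Arguments. Unset Strict Implicit. Unset Printing Implicit Defensive.
Import GRing.Theory.
Local Open Scope ring_scope.

Definition ideal_gen (K : fieldType) (n : nat) (P : {mpoly K[n]} -> Prop)
  : {mpoly K[n]} -> Prop :=
  fun f => exists s : seq ({mpoly K[n]} * {mpoly K[n]}),
    (forall p, p \in s -> P p.2) /\ f = \sum_(p <- s) p.1 * p.2.

(* The monomial ideal generated by the monomials X^m, m in M. Every monomial
   ideal of S is of this form. *)
Definition monomial_ideal (K : fieldType) (n : nat) (M : 'X_{1..n} -> Prop)
  : {mpoly K[n]} -> Prop :=
  ideal_gen (fun g => exists m, M m /\ g = 'X_[m]).

Definition mingen (K : fieldType) (n : nat) (I : {mpoly K[n]} -> Prop)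
  (u : 'X_{1..n}) : Prop :=
  I 'X_[u] /\
  forall v : 'X_{1..n}, I 'X_[v] -> (forall i, (v i <= u i)%N) -> v = u.

(* The monomial X_F = prod_{i in F} X_i (a representative of x in S). *)
Definition xF (K : fieldType) (n : nat) (F : {set 'I_n}) : {mpoly K[n]} :=
  \prod_(i in F) 'X_i.

(* Elements of the localization R_x (R = S/I) are represented by fractions
   f / x^k, encoded as pairs (f, k) with f in S, k in nat. *)
Definition loc_equiv (K : fieldType) (n : nat) (I : {mpoly K[n]} -> Prop)
  (F : {set 'I_n}) (p q : {mpoly K[n]} * nat) : Prop :=
  exists m : nat,
    I (xF K F ^+ m * (p.1 * xF K F ^+ q.2 - q.1 * xF K F ^+ p.2)).

Definition loc_zero (K : fieldType) (n : nat) : {mpoly K[n]} * nat := (0, 0%N).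

Definition loc_lincomb (K : fieldType) (n : nat) (F : {set 'I_n}) (c d : K)
  (p q : {mpoly K[n]} * nat) : {mpoly K[n]} * nat :=
  ((c *: p.1) * xF K F ^+ q.2 + (d *: q.1) * xF K F ^+ p.2, (p.2 + q.2)%N).

Definition loc_scale (K : fieldType) (n : nat) (c : K)
  (p : {mpoly K[n]} * nat) : {mpoly K[n]} * nat := (c *: p.1, p.2).

(* The fraction f / x^k lies in (R_x)_a (a in Z^n) when f is homogeneous
   of multidegree a + k * deg x, where deg x = sum_{i in F} e_i.
   (R_x)_a is exactly the set of classes of such fractions. *)
Definition loc_deg (K : fieldType) (n : nat) (F : {set 'I_n}) (a : 'I_n -> int)
  (p : {mpoly K[n]} * nat) : Prop :=
  forall m : 'X_{1..n}, m \in msupp p.1 ->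
    forall i : 'I_n, (m i)%:Z = a i + (p.2 * (i \in F))%:Z.

From mathcomp Require Import all_boot all_order all_algebra.
From mathcomp Require Import mpoly zify.
From Stdlib Require Import Classical.
Set Implicit Arguments.
Unset Strict Implicit.
Unset Printing Implicit Defensive.
Import Order.TTheory GRing.Theory.
Local Open Scope ring_scope.

(* Every element of (R_x)_a is c X^w / x^k with w = a + k 1_F, so after
   clearing denominators any two of them are proportional monomials.  Such a
   fraction vanishes in R_x iff some minimal generator u of I divides
   X^w x^N for large N, i.e. iff u_j <= w_j = a_j for every j outside F.
   Conversely, when G_a is contained in F the exponent k = sum_i |a_i| makes
   w = a + k 1_F nonnegative, and X^w / x^k spans (R_x)_a. *)

Section Monomials.
Context (K : fieldType) (n : nat).
Implicit Types (m u v : 'X_{1..n}) (f g : {mpoly K[n]}) (b : 'I_n -> int).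
Implicit Types (P I : {mpoly K[n]} -> Prop).

Lemma ideal_gen0 P : ideal_gen P 0.
Proof. by exists [::]; split => //; rewrite big_nil. Qed.

Lemma ideal_genMl P f g :
  ideal_gen P g -> ideal_gen P (f * g).
Proof.
case=> s [sP ->]; exists [seq (f * p.1, p.2) | p <- s]; split.
  by move=> p /mapP [q qs ->]; exact: sP qs.
by rewrite big_map mulr_sumr; apply: eq_bigr => p _; rewrite mulrA.
Qed.

Lemma ideal_gen_mpolyX_le P u v :
  ideal_gen P 'X_[u] -> (u <= v)%MM -> ideal_gen P 'X_[v].
Proof. by move=> Pu uv; rewrite -(submK uv) mpolyXD; exact: ideal_genMl. Qed.

Lemma exists_mingen I v :
  I 'X_[v] -> exists2 u, mingen I u & (u <= v)%MM.
Proof.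
elim/(@ltmwf n): v => v IH Iv.
have [[w [Iw [wv wNv]]]|minimal] :=
  classic (exists w, I 'X_[w] /\ (w <= v)%MM /\ w != v).
  have [|u mu uw] := IH w _ Iw; first by rewrite lt_neqAle wNv lem_leo.
  by exists u => //; exact: lepm_trans uw wv.
exists v; last exact: lepm_refl.
split=> // w Iw wv; apply: NNPP => wNv; apply: minimal.
by exists w; split => //; split; [exact/mnm_lepP | exact/eqP].
Qed.

Lemma mpolyX_neq0 m : 'X_[m] != 0 :> {mpoly K[n]}.
Proof. by rewrite -msupp_eq0 msuppX. Qed.

Definition mnm_of_set (F : {set 'I_n}) : 'X_{1..n} :=
  [multinom (i \in F : nat) | i < n].

Lemma mnm_of_set_mulnE F k i : (mnm_of_set F *+ k)%MM i = (k * (i \in F))%N.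
Proof. by rewrite mulmnE mnmE mulnC. Qed.

Lemma xF_mpolyX F k : xF K F ^+ k = 'X_[mnm_of_set F *+ k].
Proof.
rewrite -mpolyXn mpolyXE_id /xF big_mkcond /=; congr (_ ^+ _).
by apply: eq_bigr => i _; rewrite mnmE; case: (i \in F).
Qed.

Definition single_exponent (b : 'I_n -> int) (f : {mpoly K[n]}) : Prop :=
  forall m, m \in msupp f -> forall i, (m i)%:Z = b i.

Lemma single_exponentMX b (b' : 'I_n -> int) f m :
  single_exponent b f -> (forall i, b' i = b i + (m i)%:Z) ->
  single_exponent b' (f * 'X_[m]).
Proof.
move=> fb b'E m'; rewrite (perm_mem (msuppMX f m)) => /mapP [mf mf_supp ->] i.
by rewrite b'E mnmDE -(fb _ mf_supp i); lia.
Qed.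

Lemma single_exponent_scaleX b f m :
  single_exponent b f -> (forall i, (m i)%:Z = b i) -> f = f@_m *: 'X_[m].
Proof.
move=> fb mb; apply/mpolyP => m'; rewrite mcoeffZ mcoeffX.
have [<-|mNm'] := eqVneq m m'; first by rewrite mulr1.
rewrite mulr0; apply/eqP; rewrite mcoeff_eq0; apply: contra mNm' => m'_supp.
by apply/eqP/mnmP => i; have := fb _ m'_supp i; have := mb i; lia.
Qed.

Lemma single_exponent_scale b f g :
  single_exponent b f -> single_exponent b g -> f != 0 -> exists c, g = c *: f.
Proof.
move=> fb gb f_neq0; have m_supp := mlead_supp f_neq0.
set m := mlead f in m_supp; have mb := fb _ m_supp.
have fE := single_exponent_scaleX fb mb.
have gE := single_exponent_scaleX gb mb.
exists (g@_m / f@_m); rewrite {1}gE {2}fE scalerA divfK //.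
by rewrite -mcoeff_msupp.
Qed.

End Monomials.

Section Localization.
Context (K : fieldType) (n : nat) (P : {mpoly K[n]} -> Prop).
Context (F : {set 'I_n}) (a : 'I_n -> int).
Local Notation I := (ideal_gen P).
Implicit Types p q : {mpoly K[n]} * nat.

Lemma loc_equiv0 p : p.1 = 0 -> loc_equiv I F p (loc_zero K n).
Proof.
by move=> p0; exists 0%N; rewrite /= p0 !mul0r subrr mulr0; exact: ideal_gen0.
Qed.

Lemma loc_nz_neq0 p : ~ loc_equiv I F p (loc_zero K n) -> p.1 != 0.
Proof. by move=> p_nz; apply/eqP => p0; apply: p_nz; exact: loc_equiv0. Qed.

Lemma loc_deg_mulxF p k : loc_deg F a p ->
  single_exponent (fun i => a i + ((p.2 + k) * (i \in F))%:Z)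
                  (p.1 * xF K F ^+ k).
Proof.
move=> pdeg; rewrite xF_mpolyX; apply: (single_exponentMX pdeg) => i.
by rewrite mnm_of_set_mulnE mulnDl PoszD addrA.
Qed.

Lemma loc_deg_cross p q : loc_deg F a p -> p.1 != 0 -> loc_deg F a q ->
  exists c, q.1 * xF K F ^+ p.2 = c *: (p.1 * xF K F ^+ q.2).
Proof.
move=> pdeg p_neq0 qdeg; have fdeg := loc_deg_mulxF (k := q.2) pdeg.
have gdeg := loc_deg_mulxF (k := p.2) qdeg; rewrite addnC in gdeg.
apply: single_exponent_scale fdeg gdeg _.
by rewrite mulf_neq0 // xF_mpolyX mpolyX_neq0.
Qed.

Lemma loc_deg_dependent p q : loc_deg F a p -> loc_deg F a q ->
  exists c d : K, (c != 0 \/ d != 0) /\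
    loc_equiv I F (loc_lincomb F c d p q) (loc_zero K n).
Proof.
move=> pdeg qdeg; have [p0|p_neq0] := eqVneq p.1 0.
  exists 1, 0; split; first by left; exact: oner_neq0.
  by apply: loc_equiv0; rewrite /= p0 scaler0 scale0r !mul0r addr0.
have [c qE] := loc_deg_cross pdeg p_neq0 qdeg.
exists c, (-1); split; first by right; rewrite oppr_eq0 oner_neq0.
by apply: loc_equiv0; rewrite /= -!scalerAl qE scaleN1r subrr.
Qed.

Lemma loc_deg_span p q : loc_deg F a p -> p.1 != 0 -> loc_deg F a q ->
  exists c, loc_equiv I F q (loc_scale c p).
Proof.
move=> pdeg p_neq0 qdeg; have [c qE] := loc_deg_cross pdeg p_neq0 qdeg.
by exists c, 0%N; rewrite /= qE -scalerAl subrr mulr0; exact: ideal_gen0.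
Qed.

Lemma loc_deg_neg_in p : loc_deg F a p -> p.1 != 0 ->
  forall i, a i < 0 -> i \in F.
Proof.
move=> pdeg p_neq0 i; have := pdeg _ (mlead_supp p_neq0) i.
by case: (i \in F) => //=; rewrite muln0; lia.
Qed.

(* X^u | X^w x^N for N = deg u as soon as u_j <= w_j outside F. *)
Lemma loc_deg_mingen p u : loc_deg F a p -> ~ loc_equiv I F p (loc_zero K n) ->
  mingen I u -> exists j, j \notin F /\ a j < (u j)%:Z /\ 0 <= a j.
Proof.
move=> pdeg p_nz [Iu _]; have wb := pdeg _ (mlead_supp (loc_nz_neq0 p_nz)).
apply: NNPP => no_j; apply: p_nz; exists (mdeg u).
rewrite /= expr0 mulr1 mul0r subr0 (single_exponent_scaleX pdeg wb).
rewrite -mul_mpolyC mulrCA xF_mpolyX -mpolyXD; apply: ideal_genMl.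
apply: (ideal_gen_mpolyX_le Iu); apply/mnm_lepP => j; move: (wb j).
rewrite mnmDE mnm_of_set_mulnE; case: (boolP (j \in F)) => jF /=.
  by move=> _; rewrite mdegE (bigD1 j) //= muln1 -addnA leq_addr.
rewrite !muln0 add0n => wj; case: leqP => // ltj; case: no_j.
by exists j; split => //; lia.
Qed.

Definition loc_gen_exp : nat := \sum_(i < n) absz (a i).

Definition loc_gen_mnm : 'X_{1..n} :=
  [multinom absz (a i + (loc_gen_exp * (i \in F))%:Z)%R | i < n].

Definition loc_gen : {mpoly K[n]} * nat := ('X_[loc_gen_mnm], loc_gen_exp).

Lemma loc_gen_mnmE : (forall i, a i < 0 -> i \in F) ->
  forall i, (loc_gen_mnm i)%:Z = a i + (loc_gen_exp * (i \in F))%:Z.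
Proof.
move=> negF i; rewrite mnmE.
have : (absz (a i) <= loc_gen_exp)%N.
  by rewrite /loc_gen_exp (bigD1 i) //= leq_addr.
case: (boolP (i \in F)) => iF /=; first by rewrite muln1; lia.
by have := contra (negF i) iF; rewrite -leNgt muln0; lia.
Qed.

Lemma loc_deg_gen : (forall i, a i < 0 -> i \in F) -> loc_deg F a loc_gen.
Proof.
by move=> negF m; rewrite msuppX mem_seq1 => /eqP -> i; exact: loc_gen_mnmE.
Qed.

Lemma loc_gen_nz :
  (forall u, mingen I u ->
     exists j, j \notin F /\ a j < (u j)%:Z /\ 0 <= a j) ->
  ~ loc_equiv I F loc_gen (loc_zero K n).
Proof.
move=> mingenP [m]; rewrite /= expr0 mulr1 mul0r subr0 xF_mpolyX -mpolyXD.
case/exists_mingen => u /mingenP [j [jF [aj_lt aj_ge0]]] /mnm_lepP/(_ j).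
by rewrite mnmDE mnm_of_set_mulnE mnmE (negbTE jF) /= !muln0; lia.
Qed.

End Localization.

Theorem lemma1p1 (K : fieldType) (n : nat) (M : 'X_{1..n} -> Prop)
  (F : {set 'I_n}) (a : 'I_n -> int) :
  let I := @monomial_ideal K n M in
  (* dim_K (R_x)_a <= 1 : any two elements of (R_x)_a are linearly dependent *)
  (forall p q : {mpoly K[n]} * nat,
      loc_deg F a p -> loc_deg F a q ->
      exists c d : K, (c != 0 \/ d != 0) /\
        loc_equiv I F (loc_lincomb F c d p q) (loc_zero K n)) /\
  (* (i) (R_x)_a ~= K, i.e. (R_x)_a has a one-element basis {p} *)
  ((exists p : {mpoly K[n]} * nat,
       loc_deg F a p /\ ~ loc_equiv I F p (loc_zero K n) /\
       forall q, loc_deg F a q -> exists c : K, loc_equiv I F q (loc_scale c p))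
   <->
  (* (ii) G_a subset F, and every u in G(I) has j notin F with nu_j(u) > a_j >= 0 *)
   ((forall i : 'I_n, a i < 0 -> i \in F) /\
    (forall u : 'X_{1..n}, mingen I u ->
       exists j : 'I_n, j \notin F /\ a j < (u j)%:Z /\ 0 <= a j))).
Proof.
move=> I; split; first exact: loc_deg_dependent.
split.
  case=> p [pdeg [p_nz _]].
  split; first exact: loc_deg_neg_in pdeg (loc_nz_neq0 p_nz).
  by move=> u; exact: loc_deg_mingen pdeg p_nz.
case=> negF mingenP; exists (loc_gen K F a); split; first exact: loc_deg_gen.
split; first exact: loc_gen_nz.
by move=> q; apply: loc_deg_span; [exact: loc_deg_gen | exact: mpolyX_neq0].
Qed.
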